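(* Let $(X,d)$ be a pseudometric space of diameter at most 1 and let $\phi:(X,d)\to(\bar X,\bar d)$ be its metric completion (so $\bar X$ is the set of equivalence classes of Cauchy sequences in $X$, with $(x_n)\sim(y_n)$ iff $\lim_n d(x_n,y_n)=0$, $\bar d((x_n),(y_n))=\lim_n d(x_n,y_n)$, and $\phi(x)$ the class of the constant sequence). Then $G(\phi)$ is an isomorphism in $\mathrm{ER}(\mathbf U)$, where $G:\mathbf{pMet}_1\to\mathrm{ER}(\mathbf U)$ is given by $G(X,d)=(X,d)$ and $G(f)=[(x,y)\mapsto d(f(x),y)]$.
   Context: $\mathbf{pMet}_1$: pseudometric spaces with all distances $\le 1$ and uniformly continuous maps. For functions $\alpha,\beta:Z\to[0,1]$ write $\alpha\sqsubseteq\beta$ if for every $\varepsilon>0$ there exists $\delta>0$ such that for all $z\in Z$, $\alpha(z)\le\delta$ implies $\beta(z)\le\varepsilon$. The category $\mathrm{ER}(\mathbf U)$: objects are pairs $(X,R)$ with $X$ a set and $R:X\times X\to[0,1]$ such that $R(x,x)=0$ for all $x$, $R(x,y)\sqsubseteq R(y,x)$ as functions of $(x,y)$, and $\max(R(x,y),R(y,z))\sqsubseteq R(x,z)$ as functions of $(x,y,z)$. A functional relation $(X,R)\to(Y,S)$ is a function $F:X\times Y\to[0,1]$ with $\max(F(x,y),R(x,x'),S(y,y'))\sqsubseteq F(x',y')$ as functions of $(x,x',y,y')$, $\max(F(x,y),F(x,y'))\sqsubseteq S(y,y')$ as functions of $(x,y,y')$, and $\inf_{y\in Y}F(x,y)=0$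 for all $x$. Morphisms are equivalence classes $[F]$ of functional relations, with $F\sim F'$ iff $F\sqsubseteq F'$ as functions on $X\times Y$; identity $[R]$; composite of $[F]$ and $[H]$ is $[(x,z)\mapsto\inf_y\max(F(x,y),H(y,z))]$. *)

From Stdlib Require Import Reals Lra ClassicalEpsilon.
From Coquelicot Require Import Coquelicot.
Open Scope R_scope.

Definition sqsub {Z : Type} (a b : Z -> R) : Prop :=
  forall eps, 0 < eps -> exists delta, 0 < delta /\
    forall z, a z <= delta -> b z <= eps.

(** infimum over a type, as an extended real (+oo for empty index type) *)
Definition inf_Rbar {A : Type} (f : A -> R) : Rbar :=
  Glb_Rbar (fun r => exists a, r = f a).

Definition ER_obj (X : Type) (Rel : X -> X -> R) : Prop :=
  (forall x y, 0 <= Rel x y <= 1) /\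
  (forall x, Rel x x = 0) /\
  sqsub (fun p : X * X => Rel (fst p) (snd p)) (fun p => Rel (snd p) (fst p)) /\
  sqsub (fun t : X * X * X => Rmax (Rel (fst (fst t)) (snd (fst t))) (Rel (snd (fst t)) (snd t)))
        (fun t => Rel (fst (fst t)) (snd t)).

Definition functional_rel {X Y : Type} (Rel : X -> X -> R) (S : Y -> Y -> R)
    (F : X -> Y -> R) : Prop :=
  (forall x y, 0 <= F x y <= 1) /\
  sqsub (fun t : X * X * Y * Y =>
           let '(x, x', y, y') := t in Rmax (F x y) (Rmax (Rel x x') (S y y')))
        (fun t => let '(x, x', y, y') := t in F x' y') /\
  sqsub (fun t : X * Y * Y => let '(x, y, y') := t in Rmax (F x y) (F x y'))
        (fun t => let '(x, y, y') := t in S y y') /\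
  (forall x, inf_Rbar (fun y => F x y) = Finite 0).

Definition rel_equiv {X Y : Type} (F F' : X -> Y -> R) : Prop :=
  sqsub (fun p : X * Y => F (fst p) (snd p)) (fun p => F' (fst p) (snd p)).

Definition rel_comp {X Y Z : Type} (F : X -> Y -> R) (H : Y -> Z -> R) : X -> Z -> R :=
  fun x z => real (inf_Rbar (fun y => Rmax (F x y) (H y z))).

Definition ER_iso {X Y : Type} (Rel : X -> X -> R) (S : Y -> Y -> R)
    (F : X -> Y -> R) : Prop :=
  functional_rel Rel S F /\
  exists H : Y -> X -> R, functional_rel S Rel H /\
    rel_equiv (rel_comp F H) Rel /\ rel_equiv (rel_comp H F) S.

Record PMet1 := {
  pm_car :> Type;
  pm_d : pm_car -> pm_car -> R;
  pm_d_bound : forall x y, 0 <= pm_d x y <= 1;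
  pm_d_refl : forall x, pm_d x x = 0;
  pm_d_sym : forall x y, pm_d x y = pm_d y x;
  pm_d_tri : forall x y z, pm_d x z <= pm_d x y + pm_d y z
}.

Definition G_map {X Y : Type} (dY : Y -> Y -> R) (f : X -> Y) : X -> Y -> R :=
  fun x y => dY (f x) y.

Section Completion.
Variable X : PMet1.

Definition cauchy_seq (u : nat -> X) : Prop :=
  forall eps, 0 < eps -> exists N, forall m n, (N <= m)%nat -> (N <= n)%nat ->
    pm_d X (u m) (u n) < eps.

Definition cls (u : nat -> X) : (nat -> X) -> Prop :=
  fun v => cauchy_seq v /\ is_lim_seq (fun n => pm_d X (u n) (v n)) 0.

Definition Xbar : Type :=
  { P : (nat -> X) -> Prop | exists u, cauchy_seq u /\ P = cls u }.

Definition rep (p : Xbar) : nat -> X :=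
  proj1_sig (constructive_indefinite_description _ (proj2_sig p)).

Definition dbar (p q : Xbar) : R :=
  real (Lim_seq (fun n => pm_d X (rep p n) (rep q n))).

Lemma const_cauchy (x : X) : cauchy_seq (fun _ => x).
Proof. intros eps He; exists 0%nat; intros; rewrite pm_d_refl; lra. Qed.

Definition phi (x : X) : Xbar :=
  exist _ (cls (fun _ => x)) (ex_intro _ (fun _ => x) (conj (const_cauchy x) eq_refl)).

End Completion.

From Stdlib Require Import Reals Lra Lia ClassicalEpsilon.
From Coquelicot Require Import Coquelicot.
Open Scope R_scope.

(** The proof factors through a general statement: if [f : X -> Y] is an
    isometry between objects of pMet_1 whose image is dense, then
    G(f) = [(x,y) |-> d_Y(f x, y)] is an isomorphism in ER(U), with inverse
    [(y,x) |-> d_Y(y, f x)].  Every axiom of a functional relation, and both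
    equivalences of composites with identities, reduce to inequalities of the
    form "b <= c * a", which give a ⊑ b with delta = eps / c; the triangle
    inequality supplies them, density gives the infimum condition of the
    inverse, and the infimum defining a composite is bounded below by half the
    distance between its endpoints. *)

Lemma sqsub_of_lin_bound {Z : Type} (a b : Z -> R) (c : R) :
  0 < c -> (forall z, b z <= c * a z) -> sqsub a b.
Proof.
  intros Hc Hb eps He. exists (eps / c). split.
  - apply Rdiv_lt_0_compat; assumption.
  - intros z Hz. apply Rle_trans with (c * a z); [apply Hb|].
    apply Rmult_le_compat_l with (r := c) in Hz; [|lra].
    replace (c * (eps / c)) with eps in Hz by (field; lra). exact Hz.
Qed.

Lemma Rplus_le_2Rmax (a b : R) : a + b <= 2 * Rmax a b.
Proof. pose proof (Rmax_l a b); pose proof (Rmax_r a b); lra. Qed.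

Lemma Rplus3_le_3Rmax (a b c : R) : a + b + c <= 3 * Rmax a (Rmax b c).
Proof.
  pose proof (Rmax_l a (Rmax b c)); pose proof (Rmax_r a (Rmax b c)).
  pose proof (Rmax_l b c); pose proof (Rmax_r b c); lra.
Qed.

Lemma inf_Rbar_eq_0 {A : Type} (f : A -> R) :
  (forall a, 0 <= f a) -> (forall eps, 0 < eps -> exists a, f a <= eps) ->
  inf_Rbar f = Finite 0.
Proof.
  intros Hpos Hsmall. unfold inf_Rbar.
  destruct (Glb_Rbar_correct (fun r => exists a, r = f a)) as [Hlb Hglb].
  assert (Hge : Rbar_le (Finite 0) (Glb_Rbar (fun r => exists a, r = f a))).
  { apply Hglb. intros r [a ->]. apply Hpos. }
  assert (Hle : forall eps, 0 < eps ->
            Rbar_le (Glb_Rbar (fun r => exists a, r = f a)) (Finite eps)).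
  { intros eps He. destruct (Hsmall eps He) as [a Ha].
    apply Rbar_le_trans with (Finite (f a)); [apply Hlb; exists a; reflexivity | exact Ha]. }
  destruct (Glb_Rbar _) as [m | |]; simpl in *.
  - f_equal. destruct (Rle_or_lt m 0) as [Hm | Hm]; [lra|].
    specialize (Hle (m / 2) ltac:(lra)). simpl in Hle. lra.
  - exact (False_ind _ (Hle 1 Rlt_0_1)).
  - contradiction.
Qed.

Lemma inf_Rbar_lower {A : Type} (f : A -> R) (a0 : A) (m : R) :
  (forall a, m <= f a) -> m <= real (inf_Rbar f).
Proof.
  intros Hm. unfold inf_Rbar.
  destruct (Glb_Rbar_correct (fun r => exists a, r = f a)) as [Hlb Hglb].
  assert (Hge : Rbar_le (Finite m) (Glb_Rbar (fun r => exists a, r = f a))).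
  { apply Hglb. intros r [a ->]. apply Hm. }
  assert (Hle : Rbar_le (Glb_Rbar (fun r => exists a, r = f a)) (Finite (f a0))).
  { apply Hlb. exists a0. reflexivity. }
  destruct (Glb_Rbar _); simpl in *; tauto.
Qed.

Lemma pm_d_tri3 (Z : PMet1) (p q r s : Z) :
  pm_d Z p s <= pm_d Z p q + pm_d Z q r + pm_d Z r s.
Proof. pose proof (pm_d_tri Z p q s); pose proof (pm_d_tri Z q r s); lra. Qed.

Lemma composite_half_lower (Z : PMet1) {A : Type} (g : A -> Z) (a0 : A) (p q : Z) :
  pm_d Z p q / 2 <= real (inf_Rbar (fun a => Rmax (pm_d Z p (g a)) (pm_d Z (g a) q))).
Proof.
  apply (inf_Rbar_lower _ a0). intros a.
  pose proof (pm_d_tri Z p (g a) q). pose proof (Rplus_le_2Rmax (pm_d Z p (g a)) (pm_d Z (g a) q)).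
  lra.
Qed.

Section NonexpansiveMap.
Variables (X Y : PMet1) (f : X -> Y).
Hypothesis f_nonexpansive : forall x x', pm_d Y (f x) (f x') <= pm_d X x x'.

Lemma G_map_functional : functional_rel (pm_d X) (pm_d Y) (G_map (pm_d Y) f).
Proof.
  unfold G_map. split; [|split; [|split]].
  - intros; apply pm_d_bound.
  - apply (sqsub_of_lin_bound _ _ 3); [lra|]. intros [[[x x'] y] y']; cbn.
    pose proof (pm_d_tri3 Y (f x') (f x) y y'). pose proof (pm_d_sym Y (f x') (f x)).
    pose proof (f_nonexpansive x x').
    pose proof (Rplus3_le_3Rmax (pm_d Y (f x) y) (pm_d X x x') (pm_d Y y y')). lra.
  - apply (sqsub_of_lin_bound _ _ 2); [lra|]. intros [[x y] y']; cbn.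
    pose proof (pm_d_tri Y y (f x) y'). pose proof (pm_d_sym Y y (f x)).
    pose proof (Rplus_le_2Rmax (pm_d Y (f x) y) (pm_d Y (f x) y')). lra.
  - intros x. apply inf_Rbar_eq_0; [intros; apply pm_d_bound|].
    intros eps He. exists (f x). rewrite pm_d_refl. lra.
Qed.
End NonexpansiveMap.

(** The candidate inverse of G(f): [(y,x) |-> d_Y(y, f x)]. *)
Definition co_G_map {X Y : Type} (dY : Y -> Y -> R) (f : X -> Y) : Y -> X -> R :=
  fun y x => dY y (f x).

Section DenseIsometry.
Variables (X Y : PMet1) (f : X -> Y).
Hypothesis f_isometry : forall x x', pm_d Y (f x) (f x') = pm_d X x x'.
Hypothesis f_dense : forall y eps, 0 < eps -> exists x, pm_d Y y (f x) <= eps.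

Lemma co_G_map_functional : functional_rel (pm_d Y) (pm_d X) (co_G_map (pm_d Y) f).
Proof.
  unfold co_G_map. split; [|split; [|split]].
  - intros; apply pm_d_bound.
  - apply (sqsub_of_lin_bound _ _ 3); [lra|]. intros [[[q q'] x] x']; cbn.
    pose proof (pm_d_tri3 Y q' q (f x) (f x')). pose proof (pm_d_sym Y q' q).
    pose proof (f_isometry x x').
    pose proof (Rplus3_le_3Rmax (pm_d Y q (f x)) (pm_d Y q q') (pm_d X x x')). lra.
  - apply (sqsub_of_lin_bound _ _ 2); [lra|]. intros [[q x] x']; cbn.
    pose proof (pm_d_tri Y (f x) q (f x')). pose proof (pm_d_sym Y (f x) q).
    pose proof (f_isometry x x').
    pose proof (Rplus_le_2Rmax (pm_d Y q (f x)) (pm_d Y q (f x'))). lra.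
  - intros q. apply inf_Rbar_eq_0; [intros; apply pm_d_bound | exact (f_dense q)].
Qed.

Lemma dense_isometry_iso : ER_iso (pm_d X) (pm_d Y) (G_map (pm_d Y) f).
Proof.
  split.
  - apply G_map_functional. intros x x'. rewrite f_isometry. lra.
  - exists (co_G_map (pm_d Y) f). split; [apply co_G_map_functional | split].
    + apply (sqsub_of_lin_bound _ _ 2); [lra|]. intros [x x']; cbn.
      pose proof (composite_half_lower Y (fun y => y) (f x) (f x) (f x')).
      rewrite f_isometry in H. unfold rel_comp, G_map, co_G_map. lra.
    + apply (sqsub_of_lin_bound _ _ 2); [lra|]. intros [q q']; cbn.
      destruct (f_dense q 1 Rlt_0_1) as [x0 _].
      pose proof (composite_half_lower Y f x0 q q').
      unfold rel_comp, G_map, co_G_map. lra.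
Qed.
End DenseIsometry.

Lemma lim_le (u v : nat -> R) (lu lv : R) :
  (forall n, u n <= v n) -> is_lim_seq u lu -> is_lim_seq v lv -> lu <= lv.
Proof. intros Huv Hu Hv. exact (is_lim_seq_le u v lu lv Huv Hu Hv). Qed.

Section CompletionSpace.
Variable X : PMet1.
Notation d := (pm_d X).
Notation D := (dbar X).

Lemma rep_spec (p : Xbar X) : cauchy_seq X (rep X p) /\ proj1_sig p = cls X (rep X p).
Proof. unfold rep. destruct (constructive_indefinite_description _ _). exact a. Qed.

Lemma dist_seq_ex_lim (u v : nat -> X) :
  cauchy_seq X u -> cauchy_seq X v -> ex_finite_lim_seq (fun n => d (u n) (v n)).
Proof.
  intros Hu Hv. apply ex_lim_seq_cauchy_corr. intros [eps He]; cbn.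
  destruct (Hu (eps / 2) ltac:(lra)) as [N1 H1].
  destruct (Hv (eps / 2) ltac:(lra)) as [N2 H2].
  exists (Nat.max N1 N2). intros n m Hn Hm.
  specialize (H1 n m ltac:(lia) ltac:(lia)). specialize (H2 n m ltac:(lia) ltac:(lia)).
  pose proof (pm_d_tri3 X (u n) (u m) (v m) (v n)).
  pose proof (pm_d_tri3 X (u m) (u n) (v n) (v m)).
  pose proof (pm_d_sym X (u m) (u n)). pose proof (pm_d_sym X (v m) (v n)).
  apply Rabs_def1; lra.
Qed.

Lemma dbar_lim (p q : Xbar X) : is_lim_seq (fun n => d (rep X p n) (rep X q n)) (D p q).
Proof.
  destruct (dist_seq_ex_lim _ _ (proj1 (rep_spec p)) (proj1 (rep_spec q))) as [l Hl].
  unfold dbar. rewrite (is_lim_seq_unique _ _ Hl). exact Hl.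
Qed.

Lemma dbar_bound (p q : Xbar X) : 0 <= D p q <= 1.
Proof.
  split.
  - apply (lim_le (fun _ => 0) _ _ _ (fun n => proj1 (pm_d_bound X _ _))
             (is_lim_seq_const 0) (dbar_lim p q)).
  - apply (lim_le _ (fun _ => 1) _ _ (fun n => proj2 (pm_d_bound X _ _))
             (dbar_lim p q) (is_lim_seq_const 1)).
Qed.

Lemma dbar_refl (p : Xbar X) : D p p = 0.
Proof.
  assert (D p p <= 0).
  { apply (lim_le _ (fun _ => 0) _ _ (fun n => Req_le _ _ (pm_d_refl X _))
             (dbar_lim p p) (is_lim_seq_const 0)). }
  pose proof (dbar_bound p p). lra.
Qed.

Lemma dbar_sym (p q : Xbar X) : D p q = D q p.
Proof.
  apply Rle_antisym; eapply lim_le; try apply dbar_lim;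
    intros n; cbn; rewrite pm_d_sym; lra.
Qed.

Lemma dbar_tri (p q r : Xbar X) : D p r <= D p q + D q r.
Proof.
  apply (lim_le _ _ _ _ (fun n => pm_d_tri X (rep X p n) (rep X q n) (rep X r n))
           (dbar_lim p r)).
  apply is_lim_seq_plus'; apply dbar_lim.
Qed.

Definition completion : PMet1 :=
  {| pm_car := Xbar X; pm_d := D; pm_d_bound := dbar_bound; pm_d_refl := dbar_refl;
     pm_d_sym := dbar_sym; pm_d_tri := dbar_tri |}.

Lemma rep_phi (x : X) : is_lim_seq (fun n => d x (rep X (phi X x) n)) 0.
Proof.
  destruct (rep_spec (phi X x)) as [Hc Hcls]. cbn in Hcls.
  assert (Hself : cls X (rep X (phi X x)) (rep X (phi X x))).
  { split; [exact Hc|]. apply (is_lim_seq_ext (fun _ => 0)); [|apply is_lim_seq_const].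
    intros n. rewrite pm_d_refl. reflexivity. }
  rewrite <- Hcls in Hself. exact (proj2 Hself).
Qed.

Lemma phi_isometry (x y : X) : D (phi X x) (phi X y) = d x y.
Proof.
  pose proof (dbar_lim (phi X x) (phi X y)) as HD.
  pose proof (rep_phi x) as Hx. pose proof (rep_phi y) as Hy.
  set (v := rep X (phi X x)) in *. set (w := rep X (phi X y)) in *.
  apply Rle_antisym.
  - replace (d x y) with (0 + d x y + 0) by lra.
    apply (lim_le _ _ _ _ (fun n => pm_d_tri3 X (v n) x y (w n)) HD).
    apply is_lim_seq_plus'; [apply is_lim_seq_plus'|]; [|apply is_lim_seq_const| exact Hy].
    apply (is_lim_seq_ext (fun n => d x (v n))); [intros; apply pm_d_sym | exact Hx].
  - replace (D (phi X x) (phi X y)) with (0 + D (phi X x) (phi X y) + 0) by lra.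
    apply (lim_le _ _ _ _ (fun n => pm_d_tri3 X x (v n) (w n) y) (is_lim_seq_const _)).
    apply is_lim_seq_plus'; [apply is_lim_seq_plus'; [exact Hx | exact HD]|].
    apply (is_lim_seq_ext (fun n => d y (w n))); [intros; apply pm_d_sym | exact Hy].
Qed.

(** Every point of the completion is approached by [phi] of a tail point of
    its representative. *)
Lemma phi_dense (p : Xbar X) (eps : R) : 0 < eps -> exists x, D p (phi X x) <= eps.
Proof.
  intros He. destruct (proj1 (rep_spec p) eps He) as [N HN].
  set (u := rep X p) in *. exists (u N).
  set (w := rep X (phi X (u N))).
  replace eps with (eps + 0) by lra.
  change (Rbar_le (D p (phi X (u N))) (eps + 0)).
  apply (is_lim_seq_le_loc (fun n => d (u n) (w n)) (fun n => eps + d (u N) (w n))).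
  - exists N. intros n Hn. specialize (HN n N Hn (Nat.le_refl N)).
    pose proof (pm_d_tri X (u n) (u N) (w n)). lra.
  - apply dbar_lim.
  - apply is_lim_seq_plus'; [apply is_lim_seq_const | apply rep_phi].
Qed.

End CompletionSpace.

Theorem mainTheorem10 (X : PMet1) :
  ER_iso (pm_d X) (dbar X) (G_map (dbar X) (phi X)).
Proof.
  exact (dense_isometry_iso X (completion X) (phi X) (phi_isometry X) (phi_dense X)).
Qed.
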